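(* Let $\mathbf{X}$ be a finite induced subtournament of $\mathbf{S}(2)$. Then $\mathbf{X}$ has exactly $2|\mathbf{X}|/|\mathrm{Aut}(\mathbf{X})|$ pairwise nonisomorphic extensions in $\mathcal{P}_2$.
   Context: $\mathbf{S}(2)$ is the tournament whose vertices are the points of the unit circle of $\mathbb{C}$ with rational argument, with an arc from $x$ to $y$ iff $0<\arg(y/x)<\pi$. $\mathcal{P}_2$ is the class of finite structures $\mathbf{A}=(A,<^{\mathbf{A}},P_1^{\mathbf{A}},P_2^{\mathbf{A}})$ with $<^{\mathbf{A}}$ a linear order and $(P_1^{\mathbf{A}},P_2^{\mathbf{A}})$ a partition of $A$; isomorphisms are order-preserving bijections preserving $P_1$ and $P_2$. Writing $a\sim b$ when $a,b$ lie in the same part, $p(\mathbf{A})$ is the tournament on $A$ with an arc from $a$ to $b$ iff either ($a\sim b$ and $a<^{\mathbf{A}}b$) or ($a\not\sim b$ and $b<^{\mathbf{A}}a$). An extension of a tournament $\mathbf{X}$ is any $\mathbf{A}$ with $p(\mathbf{A})=\mathbf{X}$. $\mathrm{Aut}(\mathbf{X})$ is the automorphism group of $\mathbf{X}$. *)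

From HB Require Import structures.
From mathcomp Require Import all_boot all_order all_algebra all_fingroup.
From mathcomp Require Import all_classical all_reals all_analysis.
Set Implicit Arguments. Unset Strict Implicit. Unset Printing Implicit Defensive.
Import Order.TTheory GRing.Theory Num.Theory.
Local Open Scope ring_scope.

(* Vertices of S(2): the points e^{i q} with q rational (radians); distinct
   rationals give distinct points since pi is irrational, so S(2) is indexed
   by rat.  Arc from e^{iq} to e^{ir} iff 0 < arg(e^{i(r-q)}) < pi, i.e. iff
   some representative r - q + 2 k pi of the argument lies in (0, pi). *)
Definition S2_arc (R : realType) (q r : rat) : Prop :=
  exists k : int, 0 < ratr r - ratr q + k%:~R * (2 * (pi : R)) < (pi : R).

(* A finite induced subtournament X of S(2), given by an injective labelling
   v : 'I_n -> rat of its vertices; its arc relation: *)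
Definition X_arc (R : realType) (n : nat) (v : 'I_n -> rat) (a b : 'I_n) : Prop :=
  S2_arc R (v a) (v b).

Definition AutX (R : realType) (n : nat) (v : 'I_n -> rat) : {set {perm 'I_n}} :=
  [set s : {perm 'I_n} | `[< forall a b, X_arc R v a b <-> X_arc R v (s a) (s b) >]].

(* Structures in P_2 on the vertex set 'I_n: a strict order relation
   (lt a b = "a < b") and a part indicator (true = P_1, false = P_2). *)
Definition P2struct (n : nat) : finType :=
  ({ffun 'I_n -> {ffun 'I_n -> bool}} * {ffun 'I_n -> bool})%type.

Definition P2lt n (A : P2struct n) (a b : 'I_n) : bool := A.1 a b.
Definition P2part n (A : P2struct n) (a : 'I_n) : bool := A.2 a.

Definition is_linear_order n (lt : 'I_n -> 'I_n -> bool) : Prop :=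
  [/\ (forall a, ~~ lt a a),
      (forall a b c, lt a b -> lt b c -> lt a c)
    & (forall a b, a != b -> lt a b || lt b a)].

Definition is_P2 n (A : P2struct n) : Prop := is_linear_order (P2lt A).

Definition p_arc n (A : P2struct n) (a b : 'I_n) : bool :=
  ((P2part A a == P2part A b) && P2lt A a b)
  || ((P2part A a != P2part A b) && P2lt A b a).

Definition is_extension (R : realType) n (v : 'I_n -> rat) (A : P2struct n) : Prop :=
  is_P2 A /\ forall a b, p_arc A a b <-> X_arc R v a b.

Definition P2iso n (A B : P2struct n) : Prop :=
  exists f : {perm 'I_n},
    (forall a b, P2lt B (f a) (f b) = P2lt A a b) /\
    (forall a, P2part B (f a) = P2part A a).

From HB Require Import structures.
From mathcomp Require Import all_boot all_order all_algebra all_fingroup.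
From mathcomp Require Import all_classical all_reals all_analysis.
From mathcomp Require Import zify ring lra.
Import Order.TTheory GRing.Theory Num.Theory.
Local Open Scope ring_scope.
Set Implicit Arguments. Unset Strict Implicit. Unset Printing Implicit Defensive.

(* Measure the angles of the vertices of X from one vertex m, in units of pi,
   so that they lie in [0,2).  Taking the vertices on the upper half circle as
   one part and ordering all vertices by their angle modulo pi gives an
   extension in which m is the least element, with either part for m; since pi
   is irrational, distinct vertices have distinct angles modulo pi.
   Conversely an extension is determined by its least element and the part of
   that element, so X has exactly 2|X| extensions.  Linear orders are rigid, so
   Aut(X) acts freely on the extensions by relabelling, and its orbits are the
   isomorphism classes: there are 2|X|/|Aut(X)| of them. *)

Lemma exists_transversal (T : finType) (P : T -> Prop) (e : T -> T -> Prop) :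
    (forall x, e x x) -> (forall x y, e x y -> e y x) ->
    (forall x y z, e x y -> e y z -> e x z) ->
  exists S : {set T}, [/\ forall x, x \in S -> P x,
    forall x y, x \in S -> y \in S -> e x y -> x = y
  & forall x, P x -> exists2 y, y \in S & e x y].
Proof.
move=> e_refl e_sym e_trans.
pose class x y := `[< P y /\ e x y >].
(* Each class is represented by its element of least enum_rank. *)
exists [set x | `[< P x >] & [forall y, class x y ==> (enum_rank x <= enum_rank y)%N]].
split=> [x|x y|x Px].
- by rewrite inE => /andP[/asboolP].
- rewrite !inE => /andP[/asboolP Px /forallP x_min] /andP[/asboolP Py /forallP y_min] xy.
  apply: enum_rank_inj; apply/val_inj/eqP; rewrite eqn_leq.
  rewrite (implyP (x_min y)) ?(implyP (y_min x)) //; apply/asboolP; split=> //.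
  exact: e_sym.
have x_class : class x x by apply/asboolP.
case: (arg_minnP (fun y => enum_rank y : nat) x_class) => y /asboolP[Py xy] y_min.
exists y => //; rewrite inE; apply/andP; split; first exact/asboolP.
apply/forallP => z; apply/implyP => /asboolP[Pz yz]; apply: y_min.
by apply/asboolP; split=> //; apply: e_trans xy yz.
Qed.

Section P2Structures.
Variable n : nat.
Implicit Types (A B : P2struct n) (s t : {perm 'I_n}) (a b m x y : 'I_n).

Lemma P2struct_ext A B : P2lt A =2 P2lt B -> P2part A =1 P2part B -> A = B.
Proof.
case: A B => [A1 A2] [B1 B2] ltE partE; congr pair.
  by apply/ffunP => a; apply/ffunP => b; exact: ltE.
by apply/ffunP; exact: partE.
Qed.

Lemma P2lt_p_arc A a b :
  P2lt A a b = if P2part A a == P2part A b then p_arc A a b else p_arc A b a.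
Proof. by rewrite /p_arc (eq_sym (P2part A b)); case: eqP; rewrite ?orbF. Qed.

Definition is_min A m := forall x, x != m -> P2lt A m x.

Lemma p_arc_min A m x : is_P2 A -> is_min A m -> x != m ->
  p_arc A m x = (P2part A m == P2part A x).
Proof.
move=> [irr trans _] m_min xm; have mx := m_min x xm.
have xm_false : P2lt A x m = false.
  by apply: contraNF (irr m) => /(trans _ _ _ mx).
by rewrite /p_arc mx xm_false andbT andbF orbF.
Qed.

Lemma P2_eq_min_part A B m : is_P2 A -> is_P2 B -> p_arc A =2 p_arc B ->
  is_min A m -> is_min B m -> P2part A m = P2part B m -> A = B.
Proof.
move=> A_P2 B_P2 arcE A_min B_min partm.
have partE : P2part A =1 P2part B.
  move=> x; have [-> //|xm] := eqVneq x m.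
  have := arcE m x; rewrite !p_arc_min // partm.
  by case: (P2part B m) (P2part A x) (P2part B x) => [] [] [].
by apply: P2struct_ext => // a b; rewrite !P2lt_p_arc -!partE !arcE.
Qed.

Definition below A a : nat := #|[set y | P2lt A y a]|.

Lemma below_ltn A a b : is_P2 A -> P2lt A a b -> (below A a < below A b)%N.
Proof.
move=> [irr trans _] ab; apply: proper_card; apply/properP; split.
  by apply/fintype.subsetP => y; rewrite !inE => /trans; apply.
by exists a; rewrite !inE ?ab ?(negbTE (irr a)).
Qed.

Lemma below_inj A : is_P2 A -> injective (below A).
Proof.
move=> A_P2 a b ab; have [_ _ tot] := A_P2.
apply/eqP; apply: contraT => /tot /orP[] /(below_ltn A_P2); by rewrite ab ltnn.
Qed.

Lemma exists_min A : is_P2 A -> (0 < n)%N -> exists m, is_min A m.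
Proof.
move=> A_P2 n_gt0; have [_ _ tot] := A_P2.
case: (@arg_minnP _ (Ordinal n_gt0) xpredT (below A) isT) => m _ m_min.
exists m => x xm; case/orP: (tot _ _ xm) => // /(below_ltn A_P2).
by rewrite ltnNge m_min.
Qed.

Lemma min_unique A m m' : is_P2 A -> is_min A m -> is_min A m' -> m = m'.
Proof.
move=> [irr trans _] m_min m'_min; apply/eqP; apply: contraT => mm'.
by have := irr m; rewrite (trans _ _ _ (m_min _ _) (m'_min _ mm')) // eq_sym.
Qed.

Definition relabel s A : P2struct n :=
  ([ffun x => [ffun y => A.1 (s^-1 x) (s^-1 y)]], [ffun x => A.2 (s^-1 x)])%g.

Lemma P2lt_relabelE s A x y : P2lt (relabel s A) x y = P2lt A ((s^-1)%g x) ((s^-1)%g y).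
Proof. by rewrite /P2lt /= !ffunE. Qed.

Lemma P2lt_relabel s A a b : P2lt (relabel s A) (s a) (s b) = P2lt A a b.
Proof. by rewrite P2lt_relabelE !permK. Qed.

Lemma P2part_relabel s A a : P2part (relabel s A) (s a) = P2part A a.
Proof. by rewrite /P2part /= ffunE permK. Qed.

Lemma p_arc_relabel s A a b : p_arc (relabel s A) (s a) (s b) = p_arc A a b.
Proof. by rewrite /p_arc !P2lt_relabel !P2part_relabel. Qed.

Lemma is_P2_relabel s A : is_P2 A -> is_P2 (relabel s A).
Proof.
move=> [irr trans tot]; split=> [x|x y z|x y xy]; rewrite !P2lt_relabelE //.
  exact: trans.
by apply: tot; rewrite (inj_eq (@perm_inj _ _)).
Qed.

Lemma below_relabel s A a : below (relabel s A) (s a) = below A a.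
Proof.
rewrite /below -(card_preimset _ (@perm_inj _ s)).
by apply: eq_card => y; rewrite !inE P2lt_relabel.
Qed.

(* Relabelling preserves the number of predecessors, which identifies an
   element of a finite linear order. *)
Lemma relabel_inj A s t : is_P2 A -> relabel s A = relabel t A -> s = t.
Proof.
move=> A_P2 st; apply/permP => a; apply: (below_inj (is_P2_relabel s A_P2)).
by rewrite below_relabel st below_relabel.
Qed.

Lemma P2isoP A B : P2iso A B <-> exists s, B = relabel s A.
Proof.
split=> [[s [ltE partE]]|[s ->]]; last first.
  by exists s; split=> [a b|a]; rewrite ?P2lt_relabel ?P2part_relabel.
exists s; apply: P2struct_ext => [a b|a].
  by rewrite -(permKV s a) -(permKV s b) ltE P2lt_relabel.
by rewrite -(permKV s a) partE P2part_relabel.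
Qed.

Lemma P2iso_refl A : P2iso A A.
Proof. by exists 1%g; split=> [a b|a]; rewrite !perm1. Qed.

Lemma P2iso_sym A B : P2iso A B -> P2iso B A.
Proof.
move=> [s [ltE partE]]; exists s^-1%g; split=> [a b|a].
  by rewrite -ltE !permKV.
by rewrite -partE permKV.
Qed.

Lemma P2iso_trans A B C : P2iso A B -> P2iso B C -> P2iso A C.
Proof.
move=> [s [ltE partE]] [t [ltE' partE']]; exists (s * t)%g; split=> [a b|a].
  by rewrite !permM ltE' ltE.
by rewrite permM partE' partE.
Qed.

End P2Structures.

Section Extensions.
Variables (n : nat) (T : 'I_n -> 'I_n -> Prop).
Implicit Types (A B : P2struct n) (s : {perm 'I_n}).

Definition is_ext_of A : Prop := is_P2 A /\ forall a b, p_arc A a b <-> T a b.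

Definition tour_aut : {set {perm 'I_n}} :=
  [set s : {perm 'I_n} | `[< forall a b, T a b <-> T (s a) (s b) >]].

Lemma ext_p_arc_eq A B : is_ext_of A -> is_ext_of B -> p_arc A =2 p_arc B.
Proof. by move=> [_ AT] [_ BT] a b; apply/idP/idP => [/AT/BT|/BT/AT]. Qed.

Lemma ext_relabel A s : is_ext_of A -> s \in tour_aut -> is_ext_of (relabel s A).
Proof.
move=> [A_P2 AT]; rewrite inE => /asboolP s_aut; split; first exact: is_P2_relabel.
by move=> x y; rewrite -(permKV s x) -(permKV s y) p_arc_relabel AT -s_aut.
Qed.

Lemma tour_aut_relabel A s : is_ext_of A -> is_ext_of (relabel s A) -> s \in tour_aut.
Proof.
move=> [_ AT] [_ sAT]; rewrite inE; apply/asboolP => a b.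
by rewrite -AT -sAT p_arc_relabel.
Qed.

Lemma tour_aut1 : 1%g \in tour_aut.
Proof. by rewrite inE; apply/asboolP => a b; rewrite !perm1. Qed.

(* Aut(T) acts freely on the extensions, and its orbits are the isomorphism classes. *)
Lemma card_ext_transversal (S : {set P2struct n}) :
    (forall A, A \in S -> is_ext_of A) ->
    (forall A B, A \in S -> B \in S -> P2iso A B -> A = B) ->
    (forall A, is_ext_of A -> exists2 B, B \in S & P2iso A B) ->
  (#|S| * #|tour_aut|)%N = #|[set A | `[< is_ext_of A >]]|.
Proof.
move=> S_ext S_uniq S_rep; pose act (As : P2struct n * {perm 'I_n}) := relabel As.2 As.1.
have act_inj : {in finset.setX S tour_aut &, injective act}.
  move=> [A s] [B t] /finset.setXP[AS _] /finset.setXP[BS _]; rewrite /act /= => sAtB.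
  have AB : A = B.
    apply: S_uniq => //; apply: P2iso_trans (P2iso_sym _); apply/P2isoP.
      by exists s.
    by exists t.
  by subst B; rewrite (relabel_inj (S_ext _ AS).1 sAtB).
rewrite -cardsX -(card_in_imset act_inj); apply: eq_card => C.
rewrite inE; apply/imsetP/asboolP => [[[A s] /finset.setXP[AS s_aut] ->]|C_ext].
  exact: ext_relabel (S_ext _ AS) s_aut.
have [B BS /P2iso_sym /P2isoP[s CE]] := S_rep C C_ext.
exists (B, s) => //; apply/finset.setXP; split=> //.
by apply: (tour_aut_relabel (S_ext _ BS)); rewrite -CE.
Qed.

End Extensions.

Section HalfTurns.
Variable R : realFieldType.

(* Angles in units of pi: for s, t in [0,2), the arc from s to t of S(2). *)
Definition arcpi (s t : R) : bool := (0 < t - s < 1) || (t - s < -1).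

Lemma arcpiP (s t : R) : 0 <= s < 2 -> 0 <= t < 2 ->
  (exists j : int, 0 < t - s + 2 * j%:~R < 1) <-> arcpi s t.
Proof.
move=> /andP[s0 s2] /andP[t0 t2]; rewrite /arcpi; split.
  move=> [j /andP[j_gt j_lt]].
  have j_ge0 : (-1 < j)%R by rewrite -(ltr_int R) intrN; lra.
  have j_le1 : (j < 2)%R by rewrite -(ltr_int R); lra.
  have [j0|j1] : j = 0 \/ j = 1 by lia.
    by rewrite j0 mulr0 addr0 in j_gt j_lt; rewrite j_gt j_lt.
  by rewrite j1 mulr1 in j_gt j_lt; apply/orP; right; lra.
case/orP => [arc|arc]; [exists 0 | exists 1]; rewrite ?mulr0 ?addr0 ?mulr1 //.
by apply/andP; split; lra.
Qed.

Definition mod1 (s : R) : R := if s < 1 then s else s - 1.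

Lemma mod1_eq (s t : R) : mod1 s = mod1 t -> exists e : int, s - t = e%:~R.
Proof.
rewrite /mod1; case: ifP => _; case: ifP => _ st.
- by exists 0; lra.
- by exists (-1); rewrite intrN; lra.
- by exists 1; lra.
- by exists 0; lra.
Qed.

End HalfTurns.

Arguments mod1 {R} s.

Section PrincipalArgument.
Variable R : realType.

Definition winding (t : R) : int := Num.floor (t / pi / 2).

Definition argpi (t : R) : R := t / pi - 2 * (winding t)%:~R.

Lemma argpi_itv (t : R) : 0 <= argpi t < 2.
Proof.
rewrite /argpi /winding; have := Num.Theory.floor_itv (t / pi / 2).
by rewrite intrD; set f := (Num.floor _)%:~R => /andP[f_le f_gt]; apply/andP; split; lra.
Qed.

Lemma argpiE (t : R) : t = pi * (argpi t + 2 * (winding t)%:~R).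
Proof. by rewrite /argpi subrK mulrC divfK // gt_eqF // pi_gt0. Qed.

Lemma argpi0 : argpi 0 = 0.
Proof. by rewrite /argpi /winding !mul0r Num.Theory.floor0 mulr0 subr0. Qed.

Lemma argpi_subE (a b c : R) : b - a =
  pi * (argpi (b - c) - argpi (a - c) + 2 * (winding (b - c) - winding (a - c))%:~R).
Proof.
transitivity ((b - c) - (a - c)); first by ring.
by rewrite {1}(argpiE (b - c)) {1}(argpiE (a - c)) intrB; ring.
Qed.

Lemma arc_argpi (a b c : R) :
  (exists k : int, 0 < b - a + k%:~R * (2 * pi) < pi) <->
  arcpi (argpi (a - c)) (argpi (b - c)).
Proof.
rewrite -arcpiP ?argpi_itv //.
set w := winding (b - c) - winding (a - c).
have shift k : b - a + k%:~R * (2 * pi) =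
    pi * (argpi (b - c) - argpi (a - c) + 2 * (w + k)%:~R).
  by rewrite (argpi_subE a b c) intrD /w; ring.
have pi_gt0 : (0 : R) < pi := pi_gt0 R.
split=> [[k]|[j]]; first by rewrite shift pmulr_rgt0 // gtr_pMr //; exists (w + k).
exists (j - w); rewrite shift pmulr_rgt0 // gtr_pMr //.
by have -> : w + (j - w) = j by ring.
Qed.

Lemma ratr_eq_pi_mulz (q : rat) (c : int) : (ratr q : R) = pi * c%:~R -> c = 0.
Proof.
move=> qE; apply/eqP/negPn/negP => c_neq0.
apply: (@pi_irrationnal R); exists (q / c%:~R) => //.
have c_neq0R : (c%:~R : R) != 0 by rewrite intr_eq0.
have -> : (ratr (q / c%:~R) : R) = ratr q / ratr c%:~R by rewrite fmorph_div.
by rewrite ratr_int qE mulfK.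
Qed.

Lemma argpi_ratr_subz (c : R) (q r : rat) (e : int) :
  argpi (ratr q - c) - argpi (ratr r - c) = e%:~R -> q = r.
Proof.
move=> eE; have qrE : (ratr (q - r) : R) =
    pi * (e + 2 * (winding (ratr q - c) - winding (ratr r - c)))%:~R.
  by rewrite rmorphB /= (argpi_subE _ _ c) eE; ring.
apply: (fmorph_inj (@ratr R)); apply/eqP; rewrite -subr_eq0 -rmorphB /= qrE.
by rewrite (ratr_eq_pi_mulz qrE) mulr0.
Qed.

End PrincipalArgument.

Section AngleStructure.
Variables (R : realFieldType) (n : nat) (theta : 'I_n -> R).
Hypothesis theta_itv : forall x, 0 <= theta x < 2.

(* The upper half circle [0,1) is one part; the order compares angles modulo pi. *)
Definition angle_struct (b : bool) : P2struct n :=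
  ([ffun x => [ffun y => mod1 (theta x) < mod1 (theta y)]], [ffun x => (theta x < 1) == b]).

Lemma P2lt_angle_struct b x y :
  P2lt (angle_struct b) x y = (mod1 (theta x) < mod1 (theta y)).
Proof. by rewrite /P2lt /= !ffunE. Qed.

Lemma P2part_angle_struct b x : P2part (angle_struct b) x = ((theta x < 1) == b).
Proof. by rewrite /P2part /= ffunE. Qed.

Lemma is_P2_angle_struct b : injective (mod1 \o theta) -> is_P2 (angle_struct b).
Proof.
move=> theta_inj; split=> [x|x y z|x y xy]; rewrite !P2lt_angle_struct.
- by rewrite ltxx.
- exact: lt_trans.
- by apply: lt_total; apply: contra xy => /eqP/theta_inj ->.
Qed.

Lemma p_arc_angle_struct b x y :
  p_arc (angle_struct b) x y = arcpi (theta x) (theta y).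
Proof.
rewrite /p_arc !P2lt_angle_struct !P2part_angle_struct.
have -> : (((theta x < 1) == b) == ((theta y < 1) == b)) = ((theta x < 1) == (theta y < 1)).
  by case: b (theta x < 1) (theta y < 1) => [] [] [].
have /andP[x0 x2] := theta_itv x; have /andP[y0 y2] := theta_itv y.
rewrite /arcpi /mod1; case: (ltP (theta x) 1) => x1; case: (ltP (theta y) 1) => y1 /=;
  apply/idP/idP => [xy|/orP[/andP[xy1 xy2]|xy]];
  by [apply/orP; left; apply/andP; split; lra | apply/orP; right; lra | lra].
Qed.

Lemma angle_struct_min b m : injective (mod1 \o theta) -> theta m = 0 ->
  is_min (angle_struct b) m.
Proof.
move=> theta_inj m0 x xm; rewrite P2lt_angle_struct m0 /mod1 ltr01.
have /andP[x0 x2] := theta_itv x.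
have : mod1 (theta x) != mod1 (theta m) by apply: contra xm => /eqP/theta_inj ->.
by rewrite m0 /mod1 ltr01; case: ifP => x1 x_neq0; rewrite lt_neqAle eq_sym x_neq0 /=; lra.
Qed.

Lemma P2part_angle_struct0 b m : theta m = 0 -> P2part (angle_struct b) m = b.
Proof. by move=> m0; rewrite P2part_angle_struct m0 ltr01; case: b. Qed.

End AngleStructure.

Section S2Extensions.
Variables (R : realType) (n : nat) (v : 'I_n -> rat).
Hypothesis v_inj : injective v.

Definition s2_angle m x : R := argpi (ratr (v x) - ratr (v m)).

Definition s2_ext m b : P2struct n := angle_struct (s2_angle m) b.

Lemma s2_angle_itv m x : 0 <= s2_angle m x < 2.
Proof. exact: argpi_itv. Qed.

Lemma s2_angle_mm m : s2_angle m m = 0.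
Proof. by rewrite /s2_angle subrr argpi0. Qed.

Lemma mod1_s2_angle_inj m : injective (mod1 \o s2_angle m).
Proof. by move=> x y /mod1_eq[e /argpi_ratr_subz /v_inj]. Qed.

Lemma s2_ext_is_extension m b : is_extension R v (s2_ext m b).
Proof.
split; first exact/is_P2_angle_struct/mod1_s2_angle_inj.
move=> x y; rewrite p_arc_angle_struct; last exact: s2_angle_itv.
by rewrite /X_arc /S2_arc (arc_argpi _ _ (ratr (v m))).
Qed.

Lemma s2_ext_min m b : is_min (s2_ext m b) m.
Proof.
exact/angle_struct_min/s2_angle_mm/mod1_s2_angle_inj/s2_angle_itv.
Qed.

Lemma P2part_s2_ext m b : P2part (s2_ext m b) m = b.
Proof. exact/P2part_angle_struct0/s2_angle_mm. Qed.

Lemma s2_ext_inj : injective (fun mb : 'I_n * bool => s2_ext mb.1 mb.2).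
Proof.
move=> [m b] [m' b'] /= mbE.
have mm' : m = m'.
  apply: (min_unique (s2_ext_is_extension m b).1 (s2_ext_min b)).
  by rewrite mbE; exact: s2_ext_min.
by subst m'; rewrite -(P2part_s2_ext m b) mbE P2part_s2_ext.
Qed.

Lemma s2_extP A : (0 < n)%N -> is_extension R v A -> exists m b, A = s2_ext m b.
Proof.
move=> n_gt0 A_ext; have [m m_min] := exists_min A_ext.1 n_gt0.
have B_ext := s2_ext_is_extension m (P2part A m).
exists m, (P2part A m).
apply: (P2_eq_min_part A_ext.1 B_ext.1 (ext_p_arc_eq A_ext B_ext) m_min (s2_ext_min _)).
by rewrite P2part_s2_ext.
Qed.

Lemma card_S2_extensions : (0 < n)%N ->
  #|[set A | `[< is_extension R v A >]]| = (2 * n)%N.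
Proof.
move=> n_gt0.
have -> : [set A | `[< is_extension R v A >]] = [set s2_ext mb.1 mb.2 | mb : 'I_n * bool].
  apply/finset.setP => A; rewrite inE; apply/asboolP/imsetP.
    by move=> /(s2_extP n_gt0)[m [b ->]]; exists (m, b).
  by move=> [[m b] _ ->]; exact: s2_ext_is_extension.
by rewrite card_imset ?card_prod ?card_ord ?card_bool 1?mulnC //; exact: s2_ext_inj.
Qed.

End S2Extensions.

Theorem lemma2 (R : realType) (n : nat) (v : 'I_n -> rat) :
  injective v -> (0 < n)%N ->
  exists S : {set P2struct n},
    [/\ (forall A, A \in S -> is_extension R v A),
        (forall A B, A \in S -> B \in S -> P2iso A B -> A = B),
        (forall A, is_extension R v A -> exists2 B, B \in S & P2iso A B)
      & (#|S|%:R : rat) = (2 * n)%:R / (#|AutX R v|)%:R].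
Proof.
move=> v_inj n_gt0.
have [S [S_ext S_uniq S_rep]] :=
  exists_transversal (is_extension R v) (@P2iso_refl n) (@P2iso_sym n) (@P2iso_trans n).
exists S; split=> //.
have cardS : (#|S| * #|AutX R v|)%N = (2 * n)%N.
  rewrite -(card_S2_extensions R v_inj n_gt0).
  exact: (card_ext_transversal S_ext S_uniq S_rep).
have aut_gt0 : (0 < #|AutX R v|)%N by apply/card_gt0P; exists 1%g; exact: tour_aut1.
by rewrite -cardS natrM mulfK // pnatr_eq0 -lt0n.
Qed.
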